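(* Let $k\ge 1$, $\epsilon\in(0,1]$, and let $F=F_1\times\cdots\times F_n$ be a $k$-unit auction instance with quasi-regular distributions forming an $\epsilon$-large market, normalized so that $\mathrm{AP}(F)=1$. Let $\gamma$ be a constant such that $\mathrm{OPT}(G)\le\gamma\log k\cdot\mathrm{AP}(G)$ for every $k$-unit instance $G$ with quasi-regular distributions. Then for every price $p\ge\frac1k$ and every agent $i$, $F_i(p)\ge 1-\epsilon\cdot\gamma k\log k$.
   Context: A seller has $k$ identical units and $n$ unit-demand agents with independent private values $v_i\sim F_i$ ($F_i$ also denotes the CDF), utility $v_ix_i-p_i$. $\mathrm{OPT}(F)$ is the maximum expected revenue over Bayesian incentive compatible, interim individually rational mechanisms allocating at most $k$ units. An anonymous pricing mechanism with price $p$ offers $p$ to agents one at a time in an arbitrary order until units run out (agents with $v_i\ge p$ accept); $\mathrm{AP}(F)$ is the maximum over $p$ of its expected revenue. With virtual value $\phi_i(v)=v-\frac{1-F_i(v)}{f_i(v)}$, $F_i$ is quasi-regular if $\mathbb{E}_{\hat v\sim F_i}[\phi_i(\hat v)\mid\hat v\le v]$ is weakly increasing in $v$. With $v_i(q)=\inf\{v:F_i(v)\ge1-q\}$ and $R_i(q)=q\,v_i(q)$, the monopoly revenue of agent $i$ is $R_i(q_i^* )=\max_q R_i(q)$; $F$ is an $\epsilon$-large market if $R_i(q_i^* )\le\epsilon\cdot\mathrm{OPT}(F)$ for all $i$. *)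

From HB Require Import structures.
From mathcomp Require Import all_boot all_order all_algebra.
From mathcomp Require Import all_classical all_reals all_analysis.

Set Implicit Arguments.
Unset Strict Implicit.
Unset Printing Implicit Defensive.

Import Order.TTheory GRing.Theory Num.Theory.
Import numFieldNormedType.Exports.

Local Open Scope classical_set_scope.
Local Open Scope ring_scope.

Section auction.
Variable R : realType.

Notation leb := (@lebesgue_measure R).

(* A value distribution, given by a (Lebesgue) density f on R:
   nonnegative, measurable, total mass 1, and values are nonnegative. *)
Definition is_density (f : R -> R) : Prop :=
  [/\ (forall x, 0 <= f x),
      measurable_fun [set: R] f,
      (forall x, x < 0 -> f x = 0) &
      (\int[leb]_x (f x)%:E = 1)%E].

Definition val_cdf (f : R -> R) (v : R) : R :=
  fine (\int[leb]_(t in `]-oo, v]) (f t)%:E)%E.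

Definition virtual_value (f : R -> R) (v : R) : R :=
  v - (1 - val_cdf f v) / f v.

(* E_{v_hat ~ F}[ phi(v_hat) | v_hat <= v ] (defined when F(v) > 0) *)
Definition cond_exp_phi (f : R -> R) (v : R) : \bar R :=
  ((\int[leb]_(t in `]-oo, v]) (virtual_value f t * f t)%:E)
   * ((val_cdf f v)^-1)%:E)%E.

Definition quasi_regular (f : R -> R) : Prop :=
  forall v w, 0 < val_cdf f v -> v <= w -> (cond_exp_phi f v <= cond_exp_phi f w)%E.

Definition quantile_value (f : R -> R) (q : R) : R :=
  inf [set v : R | 0 <= v /\ 1 - q <= val_cdf f v].

Definition revenue_curve (f : R -> R) (q : R) : R := q * quantile_value f q.

Definition monopoly_revenue (f : R -> R) : \bar R :=
  ereal_sup [set (revenue_curve f q)%:E | q in `[0, 1]].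

Definition set_coord (n : nat) (v : n.-tuple R) (j : 'I_n) (t : R) : n.-tuple R :=
  [tuple (if i == j then t else tnth v i) | i < n].

Definition zero_profile (n : nat) : n.-tuple R := [tuple (0 : R) | i < n].

(* iterated integral of g over the coordinates listed in S, coordinate j
   being distributed with density fs j; the other coordinates are taken from v *)
Fixpoint iter_exp (n : nat) (fs : 'I_n -> R -> R) (S : seq 'I_n)
    (g : n.-tuple R -> \bar R) (v : n.-tuple R) : \bar R :=
  match S with
  | [::] => g v
  | j :: S' => (\int[leb]_t ((fs j t)%:E * iter_exp fs S' g (set_coord v j t)))%E
  end.

Definition Eprod (n : nat) (fs : 'I_n -> R -> R) (g : n.-tuple R -> \bar R) : \bar R :=
  iter_exp fs (enum 'I_n) g (zero_profile n).

Definition Einterim (n : nat) (fs : 'I_n -> R -> R) (i : 'I_n) (vi : R)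
    (g : n.-tuple R -> \bar R) : \bar R :=
  iter_exp fs (enum (predC1 i)) g (set_coord (zero_profile n) i vi).

(* A (direct revelation, possibly randomized) mechanism in reduced form:
   x i v = probability that agent i gets a unit, p i v = expected payment of i. *)
Record mechanism (n : nat) := Mechanism {
  alloc : 'I_n -> n.-tuple R -> R;
  pay : 'I_n -> n.-tuple R -> R }.

Definition interim_utility (n : nat) (fs : 'I_n -> R -> R) (M : mechanism n)
    (i : 'I_n) (vi vi' : R) : \bar R :=
  Einterim fs i vi' (fun v => (vi * alloc M i v - pay M i v)%:E).

(* feasible (at most k units), BIC and interim IR mechanism *)
Definition admissible (n : nat) (fs : 'I_n -> R -> R) (k : nat) (M : mechanism n) : Prop :=
  [/\ (forall i, measurable_fun [set: n.-tuple R] (alloc M i)),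
      (forall i, measurable_fun [set: n.-tuple R] (pay M i)),
      (forall i v, 0 <= alloc M i v <= 1) &
      (forall v, \sum_(i < n) alloc M i v <= k%:R)] /\
  [/\ (forall i, (Eprod fs (fun v => `|pay M i v|%:E) < +oo)%E),
      (forall i vi, 0 <= vi -> (Einterim fs i vi (fun v => `|pay M i v|%:E) < +oo)%E),
      (forall i vi vi', 0 <= vi -> 0 <= vi' ->
          (interim_utility fs M i vi vi' <= interim_utility fs M i vi vi)%E) &
      (forall i vi, 0 <= vi -> (0 <= interim_utility fs M i vi vi)%E)].

Definition mech_revenue (n : nat) (fs : 'I_n -> R -> R) (M : mechanism n) : \bar R :=
  Eprod fs (fun v => (\sum_(i < n) pay M i v)%:E).

Definition OPT (n : nat) (fs : 'I_n -> R -> R) (k : nat) : \bar R :=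
  ereal_sup [set mech_revenue fs M | M in [set M : mechanism n | admissible fs k M]].

Definition AP_revenue (n : nat) (fs : 'I_n -> R -> R) (k : nat) (p : R) : \bar R :=
  Eprod fs (fun v => (p * (minn k #|[set i : 'I_n | p <= tnth v i]|)%:R)%:E).

Definition AP (n : nat) (fs : 'I_n -> R -> R) (k : nat) : \bar R :=
  ereal_sup [set AP_revenue fs k p | p in [set: R]].

Definition large_market (n : nat) (fs : 'I_n -> R -> R) (k : nat) (eps : R) : Prop :=
  forall i, (monopoly_revenue (fs i) <= eps%:E * OPT fs k)%E.

End auction.

(* Posting the price p to agent i alone sells with probability 1 - F_i(p),
   so p (1 - F_i(p)) is at most the monopoly revenue of agent i, hence at
   most eps OPT(F) <= eps gamma log k AP(F) = eps gamma log k.  Since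
   p k >= 1, this bounds 1 - F_i(p) by eps gamma k log k. *)

From HB Require Import structures.
From mathcomp Require Import all_boot all_order all_algebra.
From mathcomp Require Import all_classical all_reals all_analysis.
From mathcomp Require Import measurable_realfun.
From mathcomp Require Import lra ring.

Set Implicit Arguments.
Unset Strict Implicit.
Unset Printing Implicit Defensive.

Import Order.TTheory GRing.Theory Num.Theory.
Local Open Scope ring_scope.
Local Open Scope classical_set_scope.

Section val_cdf.
Variables (R : realType) (f : R -> R).
Hypothesis hf : is_density f.
Local Notation leb := (@lebesgue_measure R).

Let f_ge0 x : 0 <= f x.
Proof. by case: hf. Qed.

Let measurable_EFin_f : measurable_fun [set: R] (EFin \o f).
Proof. by case: hf => _ mf _ _; apply/measurable_EFinP. Qed.

Let le_integral_subset (A B : set R) : measurable A -> measurable B -> A `<=` B ->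
  (\int[leb]_(t in A) (f t)%:E <= \int[leb]_(t in B) (f t)%:E)%E.
Proof.
move=> mA mB AB; apply: ge0_subset_integral => //.
- exact: measurable_funS measurable_EFin_f.
- by move=> x _; rewrite lee_fin.
Qed.

Lemma val_cdfE v : (val_cdf f v)%:E = (\int[leb]_(t in `]-oo, v]) (f t)%:E)%E.
Proof.
have int_ge0 : (0 <= \int[leb]_(t in `]-oo, v]) (f t)%:E)%E.
  by apply: integral_ge0 => x _; rewrite lee_fin.
have int_le1 : (\int[leb]_(t in `]-oo, v]) (f t)%:E <= 1)%E.
  by case: hf => _ _ _ <-; exact: le_integral_subset.
rewrite /val_cdf fineK // ge0_fin_numE //.
by rewrite (le_lt_trans int_le1) ?ltry.
Qed.

Lemma val_cdf_ge0 v : 0 <= val_cdf f v.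
Proof. by rewrite -lee_fin val_cdfE; apply: integral_ge0 => x _; rewrite lee_fin. Qed.

Lemma val_cdf_le1 v : val_cdf f v <= 1.
Proof. by rewrite -lee_fin val_cdfE; case: hf => _ _ _ <-; exact: le_integral_subset. Qed.

Lemma le_val_cdf : {homo val_cdf f : v w / v <= w}.
Proof.
move=> v w vw; rewrite -lee_fin !val_cdfE; apply: le_integral_subset => // x /=.
by rewrite !in_itv /= => /le_trans; apply.
Qed.

Lemma val_cdf_gt L : L < 1 -> exists v, L < val_cdf f v.
Proof.
move=> L1; pose u n := (\int[leb]_(t in `]-oo, (n%:R : R)]) (f t)%:E)%E.
have nd_u : {homo u : m n / (m <= n)%N >-> (m <= n)%E}.
  move=> m n mn; apply: le_integral_subset => // x /=.
  by rewrite !in_itv /= => /le_trans; apply; rewrite ler_nat.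
have itvNy_nat_cover : \bigcup_n `]-oo, (n%:R : R)] = [set: R].
  apply/seteqP; split => // x _; exists (Num.truncn x).+1 => //=.
  by rewrite in_itv /= ltW // truncnS_gt.
have u_cvg1 : u n @[n --> \oo] --> 1%E.
  case: hf => _ _ _ <-; rewrite -itvNy_nat_cover.
  apply: ge0_nondecreasing_set_cvg_integral => //.
  - move=> m n mn; rewrite subsetEset => x /=.
    by rewrite !in_itv /= => /le_trans; apply; rewrite ler_nat.
  - by move=> m; exact: measurable_funS measurable_EFin_f.
  - by move=> m x _; rewrite lee_fin.
have sup_u : ereal_sup (range u) = 1%E.
  exact: cvg_unique (ereal_nondecreasing_cvgn nd_u) u_cvg1.
have : (L%:E < ereal_sup (range u))%E by rewrite sup_u lte_fin.
by move=> /ereal_sup_gt[_ [n _ <-]]; exists n%:R; rewrite -lte_fin val_cdfE.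
Qed.

(* The inequality F(p) < 1 - q is strict because the quantile is an infimum:
   with F(p) = 1 - q, a flat CDF could put v(q) below p. *)
Lemma quantile_value_ge p q : 0 <= p -> 0 < q -> val_cdf f p < 1 - q ->
  p <= quantile_value f q.
Proof.
move=> p0 q0 Fpq; apply: lb_le_inf.
  have [v Fv] : exists v, 1 - q < val_cdf f v by apply: val_cdf_gt; lra.
  exists (Num.max v p); split; first by rewrite le_max p0 orbT.
  by rewrite (le_trans (ltW Fv)) // le_val_cdf // le_max lexx.
move=> w [_ Fw]; rewrite leNgt; apply/negP => /ltW /le_val_cdf; lra.
Qed.

Lemma posted_price_le_monopoly_revenue p : 0 <= p ->
  ((p * (1 - val_cdf f p))%:E <= monopoly_revenue f)%E.
Proof.
move=> p0; have [F1|F1] := leP 1 (val_cdf f p).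
  apply: (@le_trans _ _ (revenue_curve f 0)%:E).
    by rewrite /revenue_curve mul0r lee_fin mulr_ge0_le0 // subr_le0.
  by apply: ereal_sup_ubound; exists 0; rewrite //= in_itv /= lexx ler01.
apply/lee_mul01Pr; first by rewrite lee_fin mulr_ge0 // subr_ge0 ltW.
move=> r /andP[r0 r1]; set q := r * (1 - val_cdf f p).
have q0 : 0 < q by rewrite mulr_gt0 // subr_gt0.
have q1 : q < 1 - val_cdf f p by rewrite gtr_pMl // subr_gt0.
apply: (@le_trans _ _ (revenue_curve f q)%:E); last first.
  apply: ereal_sup_ubound; exists q => //; rewrite /= in_itv /= ltW //=.
  by have := val_cdf_ge0 p; lra.
rewrite -EFinM lee_fin /revenue_curve mulrCA -/q mulrC ler_pM2l //.
by apply: quantile_value_ge => //; lra.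
Qed.

End val_cdf.

Theorem corollary3p4 (R : realType) (k : nat) (eps gamma : R)
    (n : nat) (fs : 'I_n -> R -> R) :
  (0 < k)%N ->
  0 < eps <= 1 ->
  (forall i, is_density (fs i)) ->
  (forall i, quasi_regular (fs i)) ->
  large_market fs k eps ->
  AP fs k = 1%E ->
  (forall (m : nat) (gs : 'I_m -> R -> R),
      (forall j, is_density (gs j)) ->
      (forall j, quasi_regular (gs j)) ->
      (OPT gs k <= (gamma * ln k%:R)%:E * AP gs k)%E) ->
  forall (p : R) (i : 'I_n), k%:R^-1 <= p ->
    1 - eps * gamma * k%:R * ln k%:R <= val_cdf (fs i) p.
Proof.
move=> k0 /andP[eps0 _] hd hq hlarge hAP hgamma p i hp.
set c := eps * (gamma * ln k%:R).
have k_gt0 : 0 < (k%:R : R) by rewrite ltr0n.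
have pk_ge1 : 1 <= p * k%:R by rewrite -[leLHS](mulVf (lt0r_neq0 k_gt0)) ler_pM2r.
have p0 : 0 <= p by rewrite (le_trans _ hp) // invr_ge0 ltW.
have OPT_le : (OPT fs k <= (gamma * ln k%:R)%:E)%E.
  by rewrite -[leRHS]mule1 -hAP; exact: hgamma.
have monopoly_le : (monopoly_revenue (fs i) <= c%:E)%E.
  rewrite EFinM; apply: le_trans (hlarge i) _.
  by apply: lee_wpmul2l; rewrite // lee_fin ltW.
have posted_le : p * (1 - val_cdf (fs i) p) <= c.
  by rewrite -lee_fin (le_trans (posted_price_le_monopoly_revenue (hd i) p0)).
have tail_ge0 : 0 <= 1 - val_cdf (fs i) p by rewrite subr_ge0 (val_cdf_le1 (hd i)).
have : 1 - val_cdf (fs i) p <= (1 - val_cdf (fs i) p) * (p * k%:R).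
  by rewrite ler_peMr.
have : (1 - val_cdf (fs i) p) * (p * k%:R) <= c * k%:R.
  by rewrite [leLHS]mulrA (ler_pM2r k_gt0) mulrC.
have -> : eps * gamma * k%:R * ln k%:R = c * k%:R by rewrite /c; ring.
lra.
Qed.
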